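(* Let $\lambda>0$ and $\overline{S}_{\lambda}=\{z\in\mathbb{S}: d_{\mathbb{S}}(z,0)\leqslant\lambda\}$. Then $$\max\{|z|: z\in\overline{S}_{\lambda}\}=\frac{2}{\pi}\lambda.$$
   Context: $\mathbb{S}=\{z\in\mathbb{C}:-1<\operatorname{Re} z<1\}$. The hyperbolic density of $\mathbb{S}$ is $\rho_{\mathbb{S}}(z)=\frac{\pi}{2}\big/\cos\left(\frac{\pi}{2}\operatorname{Re} z\right)$ and $d_{\mathbb{S}}(z_1,z_2)=\inf_\gamma\int_\gamma\rho_{\mathbb{S}}(z)|dz|$ over $C^1$ curves $\gamma$ in $\mathbb{S}$ joining $z_1$ to $z_2$. *)

From Stdlib Require Import Reals.
From Coquelicot Require Import Coquelicot.
Open Scope R_scope.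

Definition in_strip (z : C) : Prop := -1 < Re z < 1.

Definition rho_S (z : C) : R := (PI / 2) / cos (PI / 2 * Re z).

(* A C^1 curve parametrized on [0,1] (given as a C^1 map R -> C, i.e. both
   coordinate functions are differentiable everywhere with continuous
   derivative; every C^1 curve on [0,1] extends to such a map). *)
Definition C1_curve (g : R -> C) : Prop :=
  (forall t, ex_derive (fun s => Re (g s)) t /\ ex_derive (fun s => Im (g s)) t) /\
  (forall t, continuous (Derive (fun s => Re (g s))) t /\
             continuous (Derive (fun s => Im (g s))) t).

Definition hlength (g : R -> C) : R :=
  RInt (fun t => rho_S (g t) *
                 sqrt ((Derive (fun s => Re (g s)) t) ^ 2 +
                       (Derive (fun s => Im (g s)) t) ^ 2)) 0 1.

Definition curve_in_S (g : R -> C) (z1 z2 : C) : Prop :=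
  C1_curve g /\ g 0 = z1 /\ g 1 = z2 /\ (forall t, 0 <= t <= 1 -> in_strip (g t)).

Definition d_S (z1 z2 : C) : Rbar :=
  Glb_Rbar (fun L => exists g, curve_in_S g z1 z2 /\ L = hlength g).

Definition closed_disc_S (lam : R) (z : C) : Prop :=
  in_strip z /\ Rbar_le (d_S z 0) (Finite lam).

From Stdlib Require Import Reals Lra FunctionalExtensionality.
From Coquelicot Require Import Coquelicot.
Open Scope R_scope.

(* The density is at least pi/2 on S, with equality on the imaginary axis.
   Projecting a curve from z1 to z2 onto the direction of z2 - z1 and using
   Cauchy-Schwarz shows that its Euclidean length, hence (2/pi) times its
   hyperbolic length, is at least |z1 - z2|; so the disc of radius lam lies in
   the Euclidean disc of radius (2/pi) lam.  The segment from i (2/pi) lam to 0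
   has hyperbolic length exactly lam, so the bound is attained. *)

Definition speed (g : R -> C) (t : R) : R :=
  sqrt ((Derive (fun s => Re (g s)) t) ^ 2 + (Derive (fun s => Im (g s)) t) ^ 2).

Lemma hlength_speed (g : R -> C) :
  hlength g = RInt (fun t => rho_S (g t) * speed g t) 0 1.
Proof. reflexivity. Qed.

Lemma cos_half_pi_strip (x : R) : -1 < x < 1 -> 0 < cos (PI / 2 * x) <= 1.
Proof.
  intros Hx; pose proof PI_RGT_0; split.
  - apply cos_gt_0; nra.
  - apply COS_bound.
Qed.

Lemma rho_S_ge (z : C) : in_strip z -> PI / 2 <= rho_S z.
Proof.
  intros Hz; destruct (cos_half_pi_strip _ Hz) as [Hpos Hle1].
  pose proof PI_RGT_0.
  unfold rho_S; apply (Rle_div_r _ _ _ Hpos); nra.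
Qed.

Lemma rho_S_imag (z : C) : Re z = 0 -> rho_S z = PI / 2.
Proof. intros Hz; unfold rho_S; rewrite Hz, Rmult_0_r, cos_0; field. Qed.

Lemma rho_S_continuous (g : R -> C) (t : R) :
  continuous (fun s => Re (g s)) t -> in_strip (g t) ->
  continuous (fun s => rho_S (g s)) t.
Proof.
  intros Hre Hz; destruct (cos_half_pi_strip _ Hz) as [Hpos _].
  apply (continuous_mult (fun _ => PI / 2) (fun s => / cos (PI / 2 * Re (g s)))).
  - apply continuous_const.
  - apply continuous_Rinv_comp; [| lra].
    apply continuous_cos_comp.
    apply (continuous_mult (fun _ => PI / 2) (fun s => Re (g s))); auto.
    apply continuous_const.
Qed.

Lemma continuous_sqr_comp (f : R -> R) (t : R) :
  continuous f t -> continuous (fun s => f s ^ 2) t.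
Proof.
  intros Hf; apply (continuous_comp f (fun x => x ^ 2)); [exact Hf |].
  apply (ex_derive_continuous (K := R_AbsRing) (V := R_NormedModule)); auto_derive; trivial.
Qed.

Lemma speed_continuous (g : R -> C) (t : R) : C1_curve g -> continuous (speed g) t.
Proof.
  intros [_ Hc]; destruct (Hc t) as [HX HY].
  apply continuous_sqrt_comp.
  apply (continuous_plus (fun s => Derive (fun s => Re (g s)) s ^ 2)
                         (fun s => Derive (fun s => Im (g s)) s ^ 2));
    now apply continuous_sqr_comp.
Qed.

Lemma ex_RInt_hlength (g : R -> C) (z1 z2 : C) :
  curve_in_S g z1 z2 -> ex_RInt (fun t => rho_S (g t) * speed g t) 0 1.
Proof.
  intros [HC [_ [_ Hin]]].
  apply (ex_RInt_continuous (V := R_CompleteNormedModule)); intros t Ht.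
  rewrite Rmin_left, Rmax_right in Ht by lra.
  apply (continuous_mult (fun s => rho_S (g s)) (speed g)).
  - apply rho_S_continuous; [| now apply Hin].
    apply (ex_derive_continuous (K := R_AbsRing) (V := R_NormedModule)), (proj1 HC t).
  - now apply speed_continuous.
Qed.

Lemma is_RInt_projection (g : R -> C) (w : C) (a b : R) : C1_curve g ->
  is_RInt (fun t => Re w * Derive (fun s => Re (g s)) t + Im w * Derive (fun s => Im (g s)) t)
    a b (Re w * (Re (g b) - Re (g a)) + Im w * (Im (g b) - Im (g a))).
Proof.
  intros [Hd Hc].
  replace (Re w * (Re (g b) - Re (g a)) + Im w * (Im (g b) - Im (g a)))
    with (minus (Re w * Re (g b) + Im w * Im (g b)) (Re w * Re (g a) + Im w * Im (g a)))
    by (unfold minus, plus, opp; simpl; ring).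
  apply (is_RInt_derive (fun t => Re w * Re (g t) + Im w * Im (g t))); intros t _.
  - apply (is_derive_plus (fun t => Re w * Re (g t)) (fun t => Im w * Im (g t)));
      apply is_derive_scal, Derive_correct, (Hd t).
  - apply (continuous_plus (fun t => Re w * Derive (fun s => Re (g s)) t)
                           (fun t => Im w * Derive (fun s => Im (g s)) t));
      [ apply (continuous_mult (fun _ => Re w) (Derive (fun s => Re (g s))))
      | apply (continuous_mult (fun _ => Im w) (Derive (fun s => Im (g s)))) ];
      first [apply continuous_const | apply (Hc t)].
Qed.

Lemma projection_le_speed (g : R -> C) (w : C) (t : R) :
  Re w * Derive (fun s => Re (g s)) t + Im w * Derive (fun s => Im (g s)) t
  <= Cmod w * speed g t.
Proof.
  unfold Cmod, speed; rewrite <- !Rsqr_pow2; apply sqrt_cauchy.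
Qed.

Lemma projection_le_hlength_integrand (g : R -> C) (w : C) (t : R) : in_strip (g t) ->
  PI / 2 * (Re w * Derive (fun s => Re (g s)) t + Im w * Derive (fun s => Im (g s)) t)
  <= Cmod w * (rho_S (g t) * speed g t).
Proof.
  intros Hz; pose proof (rho_S_ge _ Hz); pose proof PI_RGT_0.
  assert (0 <= Cmod w * speed g t) by (apply Rmult_le_pos; [apply Cmod_ge_0 | apply sqrt_pos]).
  apply Rle_trans with (PI / 2 * (Cmod w * speed g t)).
  - apply Rmult_le_compat_l; [lra | apply projection_le_speed].
  - replace (Cmod w * (rho_S (g t) * speed g t)) with (rho_S (g t) * (Cmod w * speed g t))
      by ring.
    now apply Rmult_le_compat_r.
Qed.

Lemma hlength_nonneg (g : R -> C) (z1 z2 : C) : curve_in_S g z1 z2 -> 0 <= hlength g.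
Proof.
  intros Hg; pose proof PI_RGT_0.
  rewrite hlength_speed; apply RInt_ge_0; [lra | exact (ex_RInt_hlength _ _ _ Hg) |].
  intros t Ht; destruct Hg as [_ [_ [_ Hin]]].
  apply Rmult_le_pos; [| apply sqrt_pos].
  pose proof (rho_S_ge _ (Hin t ltac:(lra))); lra.
Qed.

Lemma hlength_ge_Cmod (g : R -> C) (z1 z2 : C) :
  curve_in_S g z1 z2 -> PI / 2 * Cmod (z1 - z2) <= hlength g.
Proof.
  intros Hg; pose proof Hg as [HC [H0 [H1 Hin]]]; pose proof PI_RGT_0.
  set (w := (z2 - z1)%C).
  replace (z1 - z2)%C with (- w)%C by (unfold w; ring); rewrite Cmod_opp.
  assert (Hproj : is_RInt (fun t => PI / 2 * (Re w * Derive (fun s => Re (g s)) t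
                                         + Im w * Derive (fun s => Im (g s)) t))
                    0 1 (PI / 2 * Cmod w ^ 2)).
  { rewrite Cmod2_alt.
    apply (is_RInt_scal _ _ _ (PI / 2) (Re w ^ 2 + Im w ^ 2)).
    replace (Re w ^ 2 + Im w ^ 2)
      with (Re w * (Re (g 1) - Re (g 0)) + Im w * (Im (g 1) - Im (g 0)))
      by (rewrite H0, H1; unfold w, Re, Im; simpl; ring).
    now apply is_RInt_projection. }
  assert (Hbound : PI / 2 * Cmod w ^ 2 <= Cmod w * hlength g).
  { rewrite <- (is_RInt_unique _ _ _ _ Hproj), hlength_speed.
    assert (Hex := ex_RInt_hlength _ _ _ Hg).
    change (Cmod w * RInt ?f 0 1) with (scal (Cmod w) (RInt f 0 1)).
    rewrite <- (RInt_scal _ _ _ _ Hex).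
    apply RInt_le; [lra | exists (PI / 2 * Cmod w ^ 2); exact Hproj
                   | exact (ex_RInt_scal _ _ _ _ Hex) |].
    intros t Ht; apply projection_le_hlength_integrand, Hin; lra. }
  destruct (Rle_lt_or_eq_dec _ _ (Cmod_ge_0 w)) as [Hw | Hw].
  - apply (Rmult_le_reg_l (Cmod w)); [exact Hw | lra].
  - rewrite <- Hw, Rmult_0_r; exact (hlength_nonneg _ _ _ Hg).
Qed.

Lemma d_S_le_hlength (g : R -> C) (z1 z2 : C) :
  curve_in_S g z1 z2 -> Rbar_le (d_S z1 z2) (hlength g).
Proof.
  intros Hg; apply (proj1 (Glb_Rbar_correct _)); now exists g.
Qed.

Lemma d_S_ge_Cmod (z1 z2 : C) : Rbar_le (PI / 2 * Cmod (z1 - z2)) (d_S z1 z2).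
Proof.
  apply (proj2 (Glb_Rbar_correct _)); intros L [g [Hg ->]].
  exact (hlength_ge_Cmod _ _ _ Hg).
Qed.

Definition imag_segment (y : R) (t : R) : C := (0, (1 - t) * y).

Lemma Derive_Re_imag_segment (y : R) : Derive (fun s => Re (imag_segment y s)) = fun _ => 0.
Proof. apply functional_extensionality; intros t; exact (Derive_const 0 t). Qed.

Lemma is_derive_Im_imag_segment (y t : R) : is_derive (fun s => Im (imag_segment y s)) t (- y).
Proof. unfold imag_segment, Im; simpl; auto_derive; [trivial | ring]. Qed.

Lemma Derive_Im_imag_segment (y : R) : Derive (fun s => Im (imag_segment y s)) = fun _ => - y.
Proof.
  apply functional_extensionality; intros t.
  apply is_derive_unique, is_derive_Im_imag_segment.
Qed.

Lemma curve_in_S_imag_segment (y : R) : curve_in_S (imag_segment y) (0, y) 0.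
Proof.
  repeat split.
  - exact (ex_derive_const 0 t).
  - exists (- y); apply is_derive_Im_imag_segment.
  - rewrite Derive_Re_imag_segment; apply continuous_const.
  - rewrite Derive_Im_imag_segment; apply continuous_const.
  - unfold imag_segment; f_equal; ring.
  - unfold imag_segment, RtoC; f_equal; ring.
  - unfold imag_segment, Re; simpl; lra.
  - unfold imag_segment, Re; simpl; lra.
Qed.

Lemma hlength_imag_segment (y : R) : hlength (imag_segment y) = PI / 2 * Rabs y.
Proof.
  rewrite hlength_speed, (RInt_ext _ (fun _ => PI / 2 * Rabs y)).
  - rewrite RInt_const; unfold scal; simpl; unfold mult; simpl; ring.
  - intros t _; unfold speed.
    rewrite Derive_Re_imag_segment, Derive_Im_imag_segment, rho_S_imag by reflexivity.
    f_equal; rewrite <- sqrt_Rsqr_abs; f_equal; unfold Rsqr; ring.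
Qed.

Lemma d_S_imag_le (y : R) : Rbar_le (d_S (0, y) 0) (PI / 2 * Rabs y).
Proof.
  rewrite <- hlength_imag_segment; apply d_S_le_hlength, curve_in_S_imag_segment.
Qed.

Lemma Cmod_imag (y : R) : Cmod (0, y) = Rabs y.
Proof.
  unfold Cmod; simpl; rewrite <- sqrt_Rsqr_abs; f_equal; unfold Rsqr; ring.
Qed.

Theorem lemma2 (lam : R) (hlam : 0 < lam) :
  (exists z : C, closed_disc_S lam z /\ Cmod z = 2 / PI * lam) /\
  (forall z : C, closed_disc_S lam z -> Cmod z <= 2 / PI * lam).
Proof.
  pose proof PI_RGT_0.
  assert (Hr : 0 < 2 / PI * lam) by (apply Rmult_lt_0_compat; [apply Rdiv_lt_0_compat |]; lra).
  split.
  - exists (0, 2 / PI * lam); repeat split.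
    + unfold Re; simpl; lra.
    + unfold Re; simpl; lra.
    + eapply Rbar_le_trans; [apply d_S_imag_le |].
      rewrite Rabs_pos_eq by lra; simpl; right; field; lra.
    + rewrite Cmod_imag; apply Rabs_pos_eq; lra.
  - intros z [_ Hd].
    pose proof (Rbar_le_trans _ _ _ (d_S_ge_Cmod z 0) Hd) as Hle; simpl in Hle.
    replace (z - 0)%C with z in Hle by ring.
    apply (Rmult_le_reg_l (PI / 2)); [lra |].
    replace (PI / 2 * (2 / PI * lam)) with lam by (field; lra); exact Hle.
Qed.
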